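(* Consider a round of the triadic majority rule process among participants $x,y,z$ (nodes of a median graph) in which the initial current winner is $x$, the initial proposer is $y$, and all three participants follow truthful bargaining. Then the round ends with winner $\hat w = m(x,y,z)$.
   Context: $G$ is a finite connected unweighted undirected median graph: with shortest-path distance $d$ and $I_{ab}=\{w:d(a,w)+d(w,b)=d(a,b)\}$, $\lvert I_{ab}\cap I_{ac}\cap I_{bc}\rvert=1$ for all $a,b,c$, and $m(a,b,c)$ is that node. Triadic majority rule round: there is a current winner and a proposer. In each step the proposer proposes a node $a$ or a motion to end; all three vote simultaneously to accept or reject. If an alternative is accepted by majority it becomes the current winner. If the vote is unanimous the proposer stays; otherwise the participant in the minority becomes proposer. If a motion to end is accepted by majority the round ends, its winner being the current winner. Truthful bargaining: with current winner $w$, the preferred points of $u$ are $P_u=I_{uw}\setminus\{w\}$, its bargaining points are $B_u=(P_u\cap P_{u'})\cup(P_u\cap P_{u''})$ ($u',u''$ the other two), a best bargaining point is a point of $B_u$ closest to $u$. The participant proposes a best bargaining point if $B_u\neq\emptyset$ and a motion to end otherwise; accepts an alternative $a$ iff $d(u,a)<d(u,w)$; accepts a motion to end iff $B_u=\emptyset$; ties broken arbitrarily. *)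

From mathcomp Require Import all_boot.
Set Implicit Arguments. Unset Strict Implicit. Unset Printing Implicit Defensive.

Fixpoint walkn (T : finType) (e : rel T) (n : nat) (x y : T) : bool :=
  if n is n'.+1 then [exists z, e x z && walkn e n' z y] else x == y.

(** Shortest-path distance: least [n] with a walk of length [n]
    (on a connected graph such an [n] is always < #|T|). *)
Definition gdist (T : finType) (e : rel T) (x y : T) : nat :=
  find (fun n => walkn e n x y) (iota 0 #|T|).

Definition interval (T : finType) (e : rel T) (a b : T) : {set T} :=
  [set w | gdist e a w + gdist e w b == gdist e a b].

(** m(a,b,c): the (unique, in a median graph) node of I_ab ∩ I_ac ∩ I_bc. *)
Definition median (T : finType) (e : rel T) (a b c : T) : T :=
  odflt a [pick w in interval e a b :&: interval e a c :&: interval e b c].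

Definition median_graph (T : finType) (e : rel T) : Prop :=
  [/\ symmetric e, irreflexive e, (forall x y, connect e x y) &
      forall a b c, #|interval e a b :&: interval e a c :&: interval e b c| = 1].

(** The three participants are indexed by ['I_3]; [loc u] is the node of [u]. *)

Definition loc3 (T : Type) (x y z : T) (u : 'I_3) : T := nth x [:: x; y; z] u.

Definition ag1 : 'I_3 := @Ordinal 3 1 isT.

Definition pref (T : finType) (e : rel T) (loc : 'I_3 -> T) (w : T) (u : 'I_3)
  : {set T} := interval e (loc u) w :\ w.

Definition barg (T : finType) (e : rel T) (loc : 'I_3 -> T) (w : T) (u : 'I_3)
  : {set T} := \bigcup_(v | v != u) (pref e loc w u :&: pref e loc w v).

Definition best_barg (T : finType) (e : rel T) (loc : 'I_3 -> T) (w : T)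
  (u : 'I_3) (a : T) : bool :=
  (a \in barg e loc w u) &&
  [forall b in barg e loc w u, gdist e (loc u) a <= gdist e (loc u) b].

Definition accept_alt (T : finType) (e : rel T) (loc : 'I_3 -> T) (w a : T)
  (u : 'I_3) : bool := gdist e (loc u) a < gdist e (loc u) w.

Definition accept_end (T : finType) (e : rel T) (loc : 'I_3 -> T) (w : T)
  (u : 'I_3) : bool := barg e loc w u == set0.

Definition majority (acc : 'I_3 -> bool) : bool := 2 <= #|[set u | acc u]|.

(** Unanimous vote: proposer stays; otherwise the participant in the minority
    becomes proposer. *)
Definition next_proposer (acc : 'I_3 -> bool) (p : 'I_3) : 'I_3 :=
  if [forall u, acc u == acc p] then p
  else odflt p [pick u | [forall v, (v != u) ==> (acc v != acc u)]].

(** State = (current winner, proposer).  [step s None] means the round ends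
    (with winner [s.1]); [step s (Some s')] is a transition to [s'].
    The only nondeterminism is the arbitrary choice among best bargaining
    points. *)
Inductive step (T : finType) (e : rel T) (loc : 'I_3 -> T)
  : T * 'I_3 -> option (T * 'I_3) -> Prop :=
| step_alt w p a :
    best_barg e loc w p a ->
    step e loc (w, p)
      (Some (if majority (accept_alt e loc w a) then a else w,
             next_proposer (accept_alt e loc w a) p))
| step_end_acc w p :
    barg e loc w p = set0 ->
    majority (accept_end e loc w) ->
    step e loc (w, p) None
| step_end_rej w p :
    barg e loc w p = set0 ->
    ~~ majority (accept_end e loc w) ->
    step e loc (w, p) (Some (w, next_proposer (accept_end e loc w) p)).

(** [round_ends_with e loc Q s]: from state [s], however ties are broken, the
    round ends after finitely many steps, and its winner satisfies [Q]. *)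
Inductive round_ends_with (T : finType) (e : rel T) (loc : 'I_3 -> T)
  (Q : T -> Prop) : T * 'I_3 -> Prop :=
| RE s :
    (exists o, step e loc s o) ->
    (step e loc s None -> Q s.1) ->
    (forall s', step e loc s (Some s') -> round_ends_with e loc Q s') ->
    round_ends_with e loc Q s.

(* The median m lies on all three pairwise intervals.  Hence once m is the
   current winner nobody has a bargaining point: a point preferred by both u
   and v lies in I_{u m} ∩ I_{v m}, and since m ∈ I_{u v} these intervals meet
   only in m.  So the round ends as soon as m wins.  Starting from x, the
   bargaining points of y are the points ≠ x of I_{x y} ∩ I_{x z}; every such b
   satisfies d(y,b) = d(y,m) + d(m,b), because m(b,y,z) = m(x,y,z).  Thus m is
   y's unique best bargaining point, and y and z both strictly prefer m to x. *)
From mathcomp Require Import all_boot zify.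
Set Implicit Arguments. Unset Strict Implicit. Unset Printing Implicit Defensive.

Section GraphDistance.
Variables (T : finType) (e : rel T).
Hypothesis e_sym : symmetric e.
Hypothesis e_conn : forall x y, connect e x y.
Local Notation d := (gdist e).

Lemma path_walkn x p : path e x p -> walkn e (size p) x (last x p).
Proof.
elim: p x => [|a p IH] x /=; first by rewrite eqxx.
by case/andP=> exa pth; apply/existsP; exists a; rewrite exa IH.
Qed.

Lemma walkn_cat n k x y w : walkn e n x y -> walkn e k y w -> walkn e (n + k) x w.
Proof.
elim: n x => [|n IH] x /=; first by move/eqP->.
case/existsP=> v /andP[exv Hv] Hk; apply/existsP; exists v.
by rewrite exv (IH _ Hv Hk).
Qed.

Lemma walkn_sym n x y : walkn e n x y -> walkn e n y x.
Proof.
elim: n x y => [|n IH] x y /=; first by rewrite eq_sym.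
case/existsP=> v /andP[exv Hv].
have Hvx : walkn e 1 v x by apply/existsP; exists x; rewrite /= e_sym exv eqxx.
by have := walkn_cat (IH _ _ Hv) Hvx; rewrite addn1.
Qed.

Lemma has_short_walkn x y : has (fun n => walkn e n x y) (iota 0 #|T|).
Proof.
have /connectP [p pth ->] := e_conn x y.
case/shortenP: pth => q pth_q uniq_q _.
apply/hasP; exists (size q); last exact: path_walkn.
rewrite mem_iota add0n.
have := max_card (mem (x :: q)); rewrite (card_uniqP uniq_q) /=; lia.
Qed.

Lemma gdist_lt_card x y : d x y < #|T|.
Proof.
have := has_find (fun n => walkn e n x y) (iota 0 #|T|).
by rewrite has_short_walkn size_iota => /esym.
Qed.

Lemma gdist_walkn x y : walkn e (d x y) x y.
Proof.
have := nth_find 0 (has_short_walkn x y).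
by rewrite nth_iota ?add0n // gdist_lt_card.
Qed.

Lemma gdist_min x y n : walkn e n x y -> d x y <= n.
Proof.
move=> Hn; have [le_Tn|lt_nT] := leqP #|T| n.
  exact: ltnW (leq_trans (gdist_lt_card x y) le_Tn).
rewrite leqNgt; apply/negP => lt_nd.
by have := before_find 0 lt_nd; rewrite nth_iota ?add0n // Hn.
Qed.

Lemma gdist_sym x y : d x y = d y x.
Proof. by apply/anti_leq; rewrite !gdist_min //; exact/walkn_sym/gdist_walkn. Qed.

Lemma gdist_triangle x y w : d x w <= d x y + d y w.
Proof. by apply/gdist_min/walkn_cat; apply: gdist_walkn. Qed.

Lemma gdist_refl x : d x x = 0.
Proof. by apply/eqP; rewrite -leqn0; apply: gdist_min => /=. Qed.

Lemma gdist_eq0 x y : d x y = 0 -> x = y.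
Proof. by move=> dxy; have := gdist_walkn x y; rewrite dxy => /eqP. Qed.

Lemma in_interval a b w : (w \in interval e a b) = (d a w + d w b == d a b).
Proof. by rewrite inE. Qed.

Lemma interval_sym a b : interval e a b = interval e b a.
Proof.
by apply/setP => w; rewrite !in_interval (gdist_sym a w) (gdist_sym w b)
  (gdist_sym a b) addnC.
Qed.

Lemma in_interval_id a w : (w \in interval e a a) = (w == a).
Proof.
rewrite in_interval gdist_refl; apply/eqP/eqP => [daw|->]; last by rewrite gdist_refl.
by apply: gdist_eq0; rewrite gdist_sym; lia.
Qed.

Lemma interval_meet a b m w : m \in interval e a b ->
  w \in interval e a m -> w \in interval e b m -> w = m.
Proof.
rewrite !in_interval => /eqP dab /eqP dam /eqP dbm.
have := gdist_triangle a w b; rewrite (gdist_sym w b) (gdist_sym m b) in dab *.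
by move=> dawb; apply: gdist_eq0; lia.
Qed.

Hypothesis median_card : forall a b c,
  #|interval e a b :&: interval e a c :&: interval e b c| = 1.

Lemma median_in a b c :
  median e a b c \in interval e a b :&: interval e a c :&: interval e b c.
Proof.
rewrite /median; case: pickP => [w //|none] /=.
have /card_gt0P [w Hw] : 0 < #|interval e a b :&: interval e a c :&: interval e b c|.
  by rewrite median_card.
by rewrite none in Hw.
Qed.

Lemma median_unique a b c w :
  w \in interval e a b :&: interval e a c :&: interval e b c -> w = median e a b c.
Proof.
have /eqP /cards1P [u Hu] := median_card a b c.
by have := median_in a b c; rewrite Hu !inE => /eqP -> /eqP.
Qed.

Lemma gdist_via_median x y z b : b \in interval e x y -> b \in interval e x z ->
  d y b = d y (median e x y z) + d (median e x y z) b.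
Proof.
move=> bxy bxz; have := median_in b y z; set c := median e b y z.
rewrite !in_setI => /andP[/andP[cby cbz] cyz].
have <- : c = median e x y z.
  apply: median_unique; rewrite !in_setI cyz andbT.
  move: bxy bxz cby cbz; rewrite !in_interval => /eqP ? /eqP ? /eqP ? /eqP ?.
  have := gdist_triangle x b c; have := gdist_triangle x c y.
  have := gdist_triangle x c z.
  by move=> ? ? ?; apply/andP; split; apply/eqP; lia.
move: cby; rewrite in_interval (gdist_sym y b) (gdist_sym y c) (gdist_sym c b).
by move/eqP; lia.
Qed.

End GraphDistance.

Section Round.
Variables (T : finType) (e : rel T) (loc : 'I_3 -> T) (Q : T -> Prop).

Lemma majority_all (acc : 'I_3 -> bool) : (forall u, acc u) -> majority acc.
Proof.
move=> all_acc; rewrite /majority.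
have -> : [set u | acc u] = setT by apply/setP => u; rewrite !inE all_acc.
by rewrite cardsT card_ord.
Qed.

Lemma majority_pair (acc : 'I_3 -> bool) u v :
  u != v -> acc u -> acc v -> majority acc.
Proof.
move=> uv acc_u acc_v; have uv_acc : [set u; v] \subset [set w | acc w].
  by apply/subsetP => w; rewrite !inE => /orP[]/eqP->.
by apply: leq_trans (subset_leq_card uv_acc); rewrite cards2 uv.
Qed.

Lemma round_ends_at_stalemate w p :
  (forall u, barg e loc w u = set0) -> Q w -> round_ends_with e loc Q (w, p).
Proof.
move=> no_barg Qw; have maj_end : majority (accept_end e loc w).
  by apply: majority_all => u; rewrite /accept_end no_barg.
constructor=> [|//|s' Hs].
  by exists None; apply: step_end_acc.
inversion Hs as [w' p' a best_a| |w' p' _ not_maj]; subst.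
  by move: best_a; rewrite /best_barg no_barg inE.
by rewrite maj_end in not_maj.
Qed.

Lemma round_ends_after_accepted w p a :
  best_barg e loc w p a -> (forall b, best_barg e loc w p b -> b = a) ->
  majority (accept_alt e loc w a) -> (forall q, round_ends_with e loc Q (a, q)) ->
  round_ends_with e loc Q (w, p).
Proof.
move=> best_a best_uniq maj ends_a.
have barg_a : barg e loc w p != set0 by apply/set0Pn; exists a; case/andP: best_a.
constructor=> [|Hs|s' Hs].
- by eexists; apply: step_alt best_a.
- by inversion Hs as [| w' p' no_barg |]; rewrite no_barg eqxx in barg_a.
- inversion Hs as [w' p' b best_b| |w' p' no_barg]; subst.
    by rewrite (best_uniq _ best_b) maj.
  by rewrite no_barg eqxx in barg_a.
Qed.

End Round.

Definition ag2 : 'I_3 := @Ordinal 3 2 isT.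

Section MedianOutcome.
Variables (T : finType) (e : rel T) (x y z : T).
Hypothesis G : median_graph e.
Local Notation loc := (loc3 x y z).
Local Notation m := (median e x y z).

Lemma median_in_pair_interval (u v : 'I_3) :
  u != v -> m \in interval e (loc u) (loc v).
Proof.
case: G => e_sym _ e_conn median_card.
have := median_in median_card x y z; rewrite !in_setI => /andP[/andP[mxy mxz] myz].
by case: u v => [[|[|[|?]]] ?] [[|[|[|?]]] ?] //= _; rewrite // interval_sym.
Qed.

Lemma barg_median u : barg e loc m u = set0.
Proof.
case: G => e_sym _ e_conn _.
apply/setP => a; rewrite inE; apply/bigcupP => [[v vu]].
rewrite !in_setI !in_setD1 => /andP[/andP[am a_um] /andP[_ a_vm]].
have uv : u != v by rewrite eq_sym.
by rewrite (interval_meet e_sym e_conn (median_in_pair_interval uv) a_um a_vm) eqxx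
  in am.
Qed.

Lemma mem_barg_start b : b \in barg e loc x ag1 ->
  [/\ b \in interval e x y, b \in interval e x z & b != x].
Proof.
case: G => e_sym _ e_conn _.
case/bigcupP => v; rewrite !in_setI !in_setD1 /= => v1 /andP[/andP[bx bxy] /andP[_]].
case: v v1 => [[|[|[|?]]] ?] //= _; first by rewrite in_interval_id // (negbTE bx).
by move=> bzx; split; rewrite // (interval_sym e_sym e_conn x).
Qed.

Lemma best_barg_start a : m != x -> best_barg e loc x ag1 a = (a == m).
Proof.
case: G => e_sym _ e_conn median_card mx.
have m_barg : m \in barg e loc x ag1.
  apply/bigcupP; exists ag2 => //; rewrite !in_setI !in_setD1 mx /=.
  by rewrite !(@median_in_pair_interval _ ord0).
have dy_split b :
    b \in barg e loc x ag1 -> gdist e (loc ag1) b = gdist e y m + gdist e m b.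
  by case/mem_barg_start => bxy bxz _; apply: gdist_via_median.
apply/idP/eqP => [/andP[a_barg /forallP min_a] | ->].
  have := implyP (min_a m) m_barg.
  rewrite (dy_split m) // (dy_split a) // (gdist_refl e_conn).
  by move=> dm; apply/esym/(gdist_eq0 e_conn); lia.
rewrite /best_barg m_barg; apply/forallP => b; apply/implyP => b_barg.
by rewrite (dy_split m) // (dy_split b) // (gdist_refl e_conn) leq_add2l.
Qed.

Lemma median_preferred_to_start (u : 'I_3) : u != ord0 -> m != x ->
  accept_alt e loc x m u.
Proof.
case: G => _ _ e_conn _ u0 mx; rewrite /accept_alt.
have dmx : gdist e m x != 0 by apply: contra mx => /eqP/(gdist_eq0 e_conn)->.
have := median_in_pair_interval u0; rewrite in_interval -[loc ord0]/x.
by move/eqP; lia.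
Qed.

End MedianOutcome.

Theorem lemmaI1 (T : finType) (e : rel T) (x y z : T) :
  median_graph e ->
  round_ends_with e (loc3 x y z) (fun w => w = median e x y z) (x, ag1).
Proof.
move=> G; set m := median e x y z.
have ends_at_m q : round_ends_with e (loc3 x y z) (fun w => w = m) (m, q).
  by apply: round_ends_at_stalemate => // u; apply: barg_median.
have [mx|mx] := eqVneq m x; first by rewrite -[X in (X, ag1)]mx.
apply: (round_ends_after_accepted (a := m)) => //.
- by rewrite best_barg_start.
- by move=> b; rewrite best_barg_start // => /eqP.
- by apply: (majority_pair (u := ag1) (v := ag2)); rewrite ?median_preferred_to_start.
Qed.
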